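(* Let $n\ge1$, $s\in\{1,\dots,n\}$ and let $C\in\mathbb{R}^{n\times n}$ be symmetric positive definite. Let $x^*$ be an optimal solution of the problem defining $\hat z(\lambda_{\min}(C))$, and let $\lambda^*=(\lambda^*_1\ge\dots\ge\lambda^*_n)\in\mathbb{R}^n_+$ be the eigenvalues of $M_{\lambda_{\min}(C)}(x^* )$ in nonincreasing order (with $\lambda^*_{n+1}:=0$ if $s=n$). Then $$\hat z^D(\lambda_{\min}(C))-\hat z(\lambda_{\min}(C))\ge\Theta^{lb}:=\Big(\frac{1}{\lambda^*_{s+1}+\lambda_{\min}(C)}-\frac{1}{\lambda^*_s+\lambda_{\min}(C)}\Big)\sum_{i=s+1}^n\lambda^*_i\ge0.$$
   Context: $\lambda_{\min}(C)$ is the smallest eigenvalue of $C$. For $0\le t\le\lambda_{\min}(C)$ let $A(t)\in\mathbb{R}^{n\times n}$ be a Cholesky factor of $C-tI$ (so $C-tI=A(t)^\top A(t)$), with $i$-th column $a_i(t)$, and for $x\in[0,1]^n$ let $M_t(x)=\sum_i x_i a_i(t)a_i(t)^\top$. For a positive semidefinite $X$ with eigenvalues $\lambda_1(X)\ge\dots\ge\lambda_n(X)$, $\Phi_s(X;t)=\sum_{i=1}^s\log(\lambda_i(X)+t)$ (natural log); $\widehat{\Phi}_s(\cdot\,;t)$ is its concave envelope on the cone of $n\times n$ positive semidefinite matrices (pointwise infimum of all concave functions there that are $\ge\Phi_s(\cdot\,;t)$). $\hat z(t)=\max\{\widehat{\Phi}_s(M_t(x);t) : x\in[0,1]^n,\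 \sum_i x_i=s\}$, and for $t>0$, $\hat z^D(t)=\max\{\log\det(M_t(x)+tI) : x\in[0,1]^n,\ \sum_i x_i=s\}-(n-s)\log(t)$. *)

From HB Require Import structures.
From mathcomp Require Import all_boot all_order all_algebra.
From mathcomp Require Import boolp classical_sets reals ereal exp.
Set Implicit Arguments. Unset Strict Implicit. Unset Printing Implicit Defensive.
Import Order.TTheory GRing.Theory Num.Theory.
Local Open Scope ring_scope.

Section Defs.
Variables (R : realType) (n : nat).

Definition psd (X : 'M[R]_n) : Prop :=
  X^T = X /\ forall v : 'cV[R]_n, 0 <= (v^T *m X *m v) 0 0.
Definition pd (X : 'M[R]_n) : Prop :=
  X^T = X /\ forall v : 'cV[R]_n, v != 0 -> 0 < (v^T *m X *m v) 0 0.

Definition spectrum (X : 'M[R]_n) (l : seq R) : Prop :=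
  [/\ size l = n, sorted (fun a b => b <= a) l &
      char_poly X = \prod_(a <- l) ('X - a%:P)].

(* the eigenvalue list lambda_1(X) >= ... >= lambda_n(X) (0-indexed as a seq);
   arbitrary (nseq n 0) if X has no real spectrum *)
Definition eigvals (X : 'M[R]_n) : seq R :=
  match pselect (exists l, spectrum X l) with
  | left h => projT1 (cid h)
  | right _ => nseq n 0
  end.

Definition lambda_min (C : 'M[R]_n) : R := last 0 (eigvals C).

Definition Phi (s : nat) (t : R) (X : 'M[R]_n) : R :=
  \sum_(i < s) ln (nth 0 (eigvals X) i + t).

Definition concave_on_psd (g : 'M[R]_n -> R) : Prop :=
  forall X Y (a : R), psd X -> psd Y -> 0 <= a <= 1 ->
    a * g X + (1 - a) * g Y <= g (a *: X + (1 - a) *: Y).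

Definition Phi_hat (s : nat) (t : R) (X : 'M[R]_n) : \bar R :=
  ereal_inf [set (g X)%:E | g in
    [set g | concave_on_psd g /\ forall Y, psd Y -> Phi s t Y <= g Y]].

Definition cholesky_factor (C : 'M[R]_n) (t : R) (A : 'M[R]_n) : Prop :=
  [/\ C - t%:M = A^T *m A,
      forall i j : 'I_n, (j < i)%N -> A i j = 0 &
      forall i : 'I_n, 0 <= A i i].

Definition Mx (A : 'M[R]_n) (x : 'I_n -> R) : 'M[R]_n :=
  \sum_(i < n) x i *: (col i A *m (col i A)^T).

Definition feasible (s : nat) (x : 'I_n -> R) : Prop :=
  (forall i, 0 <= x i <= 1) /\ \sum_(i < n) x i = s%:R.

Definition z_hat (A : 'M[R]_n) (s : nat) (t : R) : \bar R :=
  ereal_sup [set Phi_hat s t (Mx A x) | x in feasible s].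

Definition z_hat_D (A : 'M[R]_n) (s : nat) (t : R) : \bar R :=
  (ereal_sup [set (ln (\det (Mx A x + t%:M)))%:E | x in feasible s]
   - ((n - s)%:R * ln t)%:E)%E.

End Defs.

From HB Require Import structures.
From mathcomp Require Import all_boot all_order all_algebra.
From mathcomp Require Import boolp classical_sets reals ereal exp.
From mathcomp Require Import perm complex spectral sesquilinear.
From mathcomp Require Import ring lra zify.
Import Order.TTheory GRing.Theory Num.Theory.
Local Open Scope ring_scope.
Set Implicit Arguments. Unset Strict Implicit. Unset Printing Implicit Defensive.

(* Phi_hat s t is the least concave majorant of Phi s t on the psd cone, so it lies
   below every affine majorant.  Diagonalize M* = M_t(x* ) = V^* diag(lambda* ) V and let
   g Y = c + Re tr (G Y) with G = V^* diag(gamma) V, where gamma_i = 1/(lambda*_i + t)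
   for i <= s and gamma_i = 1/(lambda*_s + t) for i > s.  If Y has spectrum mu, the
   concavity of ln gives Phi s t Y <= c + sum_(i <= s) gamma_i mu_i; as gamma is
   nondecreasing and mu nonincreasing, the rearrangement inequality for the doubly
   stochastic matrix (|(V U^* )_ij|^2), where U diagonalizes Y, bounds
   sum_i gamma_i mu_i by Re tr (G Y).  The constant c makes g tangent to Phi s t at M*,
   so optimality of x* gives
     z_hat <= g M* = sum_(i <= s) ln (lambda*_i + t) + gamma_s sum_(i > s) lambda*_i,
   while z_hat_D >= sum_i ln (lambda*_i + t) - (n - s) ln t.  The remaining terms satisfy
   ln (1 + lambda*_i / t) >= lambda*_i / (lambda*_i + t) >= lambda*_i / (lambda*_(s+1) + t),
   which yields Theta. *)

Lemma sorted_ge_nth (R : numDomainType) (l : seq R) i j :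
  sorted (fun a b => b <= a) l -> (i <= j)%N -> (j < size l)%N -> nth 0 l j <= nth 0 l i.
Proof.
move=> l_sorted ij j_lt.
have ge_tr : transitive (fun a b : R => b <= a) by move=> ? ? ? /[swap]; apply: le_trans.
by apply: (sorted_leq_nth ge_tr (@lexx _ R)) => //; rewrite inE (leq_ltn_trans ij).
Qed.

Lemma nth_ge0 (R : numDomainType) (l : seq R) k :
  (forall a, a \in l -> 0 <= a) -> 0 <= nth 0 l k.
Proof.
move=> l_ge0; case: (ltnP k (size l)) => [k_lt|k_ge]; first by rewrite l_ge0 ?mem_nth.
by rewrite nth_default.
Qed.

Section Rearrangement.
Variable R : realFieldType.

Lemma sum_by_parts (m f : nat -> R) (N : nat) :
  \sum_(j < N.+1) m j * f j =
  \sum_(k < N) (m k - m k.+1) * \sum_(j < k.+1) f j + m N * \sum_(j < N.+1) f j.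
Proof.
elim: N => [|N IH]; first by rewrite big_ord0 add0r !big_ord1.
rewrite big_ord_recr /= IH [in RHS]big_ord_recr /= [\sum_(j < N.+2) f j]big_ord_recr /=.
set S := \sum_(j < N.+1) f j; set T := \sum_(k < N) _; ring.
Qed.

Lemma sum_prefix_le_weighted (N K : nat) (g : nat -> R) (r : 'I_N -> R) :
  (K <= N)%N ->
  (forall i j, (i <= j)%N -> (j < N)%N -> g i <= g j) ->
  (forall i, 0 <= r i <= 1) -> \sum_i r i = K%:R ->
  \sum_(i < K) g i <= \sum_(i < N) g i * r i.
Proof.
move=> KN g_mono r01 r_sum.
pose b (i : 'I_N) : R := (i < K)%N%:R.
have b_sum : \sum_i b i = K%:R.
  have -> : K%:R = \sum_(i < K) (1 : R) by rewrite sumr_const card_ord.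
  rewrite (big_ord_widen _ (fun=> 1) KN) [RHS]big_mkcond /=.
  by apply: eq_bigr => i _; rewrite /b; case: ifP.
have gb_sum : \sum_(i < K) g i = \sum_(i < N) g i * b i.
  rewrite (big_ord_widen _ g KN) big_mkcond /=.
  by apply: eq_bigr => i _; rewrite /b; case: ifP; rewrite ?mulr1 ?mulr0.
(* Each term of [gap] is a product of two factors <= 0 (i < K) or two factors >= 0. *)
pose c := g K.-1.
have gap : 0 <= \sum_(i < N) (g i - c) * (r i - b i).
  apply: sumr_ge0 => i _; have /andP[r0 r1] := r01 i.
  rewrite /b; case: ltnP => iK /=.
    by rewrite mulr_le0 // subr_le0 // g_mono //; lia.
  rewrite subr0 mulr_ge0 // subr_ge0 g_mono //; lia.
have expand : \sum_(i < N) (g i - c) * (r i - b i) =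
    \sum_(i < N) g i * r i - \sum_(i < N) g i * b i - c * (\sum_i r i - \sum_i b i).
  by rewrite mulrBr !mulr_sumr -!sumrB; apply: eq_bigr => i _; ring.
by move: gap; rewrite expand r_sum b_sum subrr mulr0 subr0 subr_ge0 -gb_sum.
Qed.

Lemma rearrangement_doubly_stochastic n (g m : nat -> R) (Q : 'I_n -> 'I_n -> R) :
  (forall i j, (i <= j)%N -> (j < n)%N -> g i <= g j) ->
  (forall i j, (i <= j)%N -> (j < n)%N -> m j <= m i) ->
  (forall i j, 0 <= Q i j) ->
  (forall i, \sum_j Q i j = 1) -> (forall j, \sum_i Q i j = 1) ->
  \sum_(i < n) g i * m i <= \sum_(i < n) \sum_(j < n) g i * Q i j * m j.
Proof.
case: n Q => [|N] Q g_mono m_anti Q_ge0 Q_row Q_col; first by rewrite !big_ord0.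
pose h (j : nat) := \sum_(i < N.+1) g i * Q i (inord j).
have -> : \sum_(i < N.+1) \sum_(j < N.+1) g i * Q i j * m j =
          \sum_(j < N.+1) m j * h j.
  rewrite exchange_big; apply: eq_bigr => j _; rewrite /h inord_val mulr_sumr.
  by apply: eq_bigr => i _; rewrite mulrC.
rewrite (eq_bigr (fun i : 'I_N.+1 => m i * g i)) => [|i _]; last exact: mulrC.
have h_sum : \sum_(j < N.+1) h j = \sum_(j < N.+1) g j.
  rewrite /h exchange_big /=; apply: eq_bigr => i _.
  rewrite -mulr_sumr -[RHS]mulr1 -(Q_row i); congr (_ * _).
  by apply: eq_bigr => j _; rewrite inord_val.
rewrite !sum_by_parts h_sum lerD2r.
apply: ler_sum => k _; apply: ler_wpM2l; first by rewrite subr_ge0 m_anti ?ltnS.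
pose r (i : 'I_N.+1) := \sum_(j < k.+1) Q i (inord j).
have -> : \sum_(j < k.+1) h j = \sum_(i < N.+1) g i * r i.
  by rewrite /h exchange_big /=; apply: eq_bigr => i _; rewrite mulr_sumr.
have kN : (k.+1 <= N.+1)%N by rewrite ltnS ltnW.
apply: sum_prefix_le_weighted => //.
- move=> i; rewrite /r sumr_ge0 //= -(Q_row i).
  rewrite (big_ord_widen _ (fun j => Q i (inord j)) kN) big_mkcond /=.
  by apply: ler_sum => j _; rewrite inord_val; case: ifP.
- by rewrite exchange_big /= (eq_bigr (fun=> 1)) ?sumr_const ?card_ord.
Qed.
End Rearrangement.

Section Logarithm.
Variable R : realType.

Lemma ln_le_tangent (a b : R) : 0 < a -> 0 < b -> ln b <= ln a + (b - a) / a.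
Proof.
move=> a_gt0 b_gt0; rewrite -lerBlDl -ln_div ?posrE // mulrBl divff ?gt_eqF //.
by rewrite -[X in ln X](subrK 1) addrC le_ln1Dx // ltrBrDr addrC subrr divr_gt0.
Qed.

Lemma ln_prod (I : Type) (r : seq I) (P : pred I) (F : I -> R) :
  (forall i, P i -> 0 < F i) ->
  ln (\prod_(i <- r | P i) F i) = \sum_(i <- r | P i) ln (F i).
Proof.
move=> F_gt0; apply: (big_morph_in Num.pos).
- by move=> x y; rewrite !posrE; apply: mulr_gt0.
- by rewrite posrE.
- by move=> x y x_gt0 y_gt0; rewrite lnM.
- exact: ln1.
- by move=> i /F_gt0; rewrite posrE.
Qed.
End Logarithm.

Lemma det_conj (F : comNzRingType) n (P Q A : 'M[F]_n) :
  Q *m P = 1%:M -> \det (Q *m A *m P) = \det A.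
Proof.
by move=> QP; rewrite !det_mulmx mulrAC -det_mulmx QP det1 mul1r.
Qed.

Lemma char_poly_conj (F : comNzRingType) n (P Q A : 'M[F]_n) :
  Q *m P = 1%:M -> char_poly (Q *m A *m P) = char_poly A.
Proof.
move=> QP; have QP' : map_mx polyC Q *m map_mx polyC P = 1%:M.
  by rewrite -map_mxM QP map_mx1.
rewrite /char_poly -[RHS](det_conj _ QP'); congr (\det _).
rewrite /char_poly_mx !map_mxM mulmxBr mulmxBl mul_mx_scalar -scalemxAl QP'.
by rewrite scalemx1.
Qed.

Lemma unitarymx_tV (C : numClosedFieldType) n (V : 'M[C]_n) :
  V \is unitarymx -> (V^t* *m V = 1%:M)%sesqui.
Proof. by move=> V_unitary; rewrite -invmx_unitary // mulVmx // unitarymx_unit. Qed.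

Section RealSymmetric.
Local Open Scope sesquilinear_scope.
Variable R : realType.
Local Notation C := R[i].
Local Notation cpx := (map_mx (real_complex R)).

Lemma symmetric_unitary_diag n (Y : 'M[R]_n) : Y^T = Y ->
  exists V : 'M[C]_n, exists d : 'I_n -> R,
    V \is unitarymx /\ cpx Y = V^t* *m diag_mx (\row_i (d i)%:C%C) *m V.
Proof.
move=> Y_sym; have Y_herm : cpx Y \is hermsymmx.
  apply/is_hermitianmxP; rewrite expr0 scale1r -{1}Y_sym.
  by apply/matrixP => i j; rewrite !mxE /=; exact/esym/conjc_real.
have /orthomx_spectralP Y_spectral := hermitian_normalmx Y_herm.
have V_unitary := spectral_unitarymx (cpx Y).
exists (spectralmx (cpx Y)), (fun i => complex.Re (spectral_diag (cpx Y) 0 i)).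
split => //; rewrite -invmx_unitary // [LHS]Y_spectral; congr (_ *m diag_mx _ *m _).
apply/rowP => i; rewrite mxE.
have /mxOverP /(_ 0 i) := hermitian_spectral_diag_real Y_herm.
by move/RRe_real.
Qed.

Lemma char_poly_unitary_diag n (Y : 'M[R]_n) (V : 'M[C]_n) (d : 'I_n -> R) :
  V \is unitarymx -> cpx Y = V^t* *m diag_mx (\row_i (d i)%:C%C) *m V ->
  char_poly Y = \prod_i ('X - (d i)%:P).
Proof.
move=> V_unitary Y_diag; apply: (@map_poly_inj _ _ (real_complex R)).
rewrite map_char_poly Y_diag char_poly_conj ?unitarymx_tV //.
rewrite char_poly_trig ?diag_mx_is_trig // rmorph_prod; apply: eq_bigr => i _.
by rewrite rmorphB /= map_polyX map_polyC !mxE eqxx mulr1n.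
Qed.

Lemma eigvals_spectrum n (Y : 'M[R]_n) l : spectrum Y l -> eigvals Y = l.
Proof.
move=> l_spec; have [_ l_sorted l_char] := l_spec.
rewrite /eigvals; case: pselect => [h|]; last by case; exists l.
case: (cid h) => l' [_ l'_sorted l'_char] /=.
apply: (@sorted_eq _ (fun a b : R => b <= a)) => //; [exact: ge_trans|exact: ge_anti|].
by apply: prod_XsubC_eq; rewrite -l_char -l'_char.
Qed.

Lemma symmetric_eigvals_diag n (Y : 'M[R]_n) : Y^T = Y ->
  spectrum Y (eigvals Y) /\
  exists V : 'M[C]_n, exists p : 'S_n, V \is unitarymx /\
    cpx Y = V^t* *m diag_mx (\row_i (nth 0 (eigvals Y) (p i))%:C%C) *m V.
Proof.
move=> Y_sym; have [V [d [V_unitary Y_diag]]] := symmetric_unitary_diag Y_sym.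
set l := sort >=%R [seq d i | i <- enum 'I_n].
have l_perm : perm_eq [seq d i | i <- enum 'I_n] l by rewrite perm_sym perm_sort.
have l_spec : spectrum Y l.
  split; first by rewrite size_sort size_map size_enum_ord.
    exact: (sort_sorted (@ge_total _ R)).
  rewrite (char_poly_unitary_diag V_unitary Y_diag) -(perm_big _ l_perm) /=.
  by rewrite big_map big_enum.
rewrite (eigvals_spectrum l_spec); split => //.
have l_size : size l == n by case: l_spec => ->.
have [p Ep] := @tuple_permP _ _ [tuple d i | i < n] (Tuple l_size) l_perm.
exists V, p; split => //; rewrite Y_diag; congr (_ *m diag_mx _ *m _).
apply/rowP => i; rewrite !mxE.
have := congr1 (fun u : n.-tuple R => tnth u i) (val_inj Ep).
by rewrite !tnth_mktuple => ->; rewrite (tnth_nth 0).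
Qed.

Lemma spectrum_eigenvector n (Y : 'M[R]_n) l a : spectrum Y l -> a \in l ->
  exists2 v : 'rV[R]_n, v *m Y = a *: v & v != 0.
Proof.
case=> _ _ Y_char a_l; apply/eigenvalueP.
by rewrite eigenvalue_root_char Y_char root_prod_XsubC.
Qed.

Lemma mulmx_trmx_gt0 n (v : 'rV[R]_n) : v != 0 -> 0 < (v *m v^T) 0 0.
Proof.
move=> v_neq0; have [j vj_neq0] : exists j, v 0 j != 0.
  apply/existsP; apply: contraR v_neq0 => /existsPn v0; apply/eqP/rowP => j.
  by rewrite mxE; apply/eqP; have := v0 j; rewrite negbK.
rewrite mxE (bigD1 j) //= mxE ltr_pwDl //.
  by rewrite -expr2 lt0r sqrf_eq0 vj_neq0 sqr_ge0.
by apply: sumr_ge0 => i _; rewrite mxE -expr2 sqr_ge0.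
Qed.

Lemma quadratic_form_eigenvector n (Y : 'M[R]_n) (v : 'rV[R]_n) a :
  v *m Y = a *: v -> ((v^T)^T *m Y *m v^T) 0 0 = a * (v *m v^T) 0 0.
Proof. by move=> vY; rewrite trmxK vY -scalemxAl mxE. Qed.

Lemma spectrum_psd_ge0 n (Y : 'M[R]_n) l a : psd Y -> spectrum Y l -> a \in l -> 0 <= a.
Proof.
move=> [_ Y_psd] Y_spec a_l; have [v vY v_neq0] := spectrum_eigenvector Y_spec a_l.
have := Y_psd v^T; rewrite (quadratic_form_eigenvector vY).
by rewrite pmulr_lge0 // mulmx_trmx_gt0.
Qed.

Lemma spectrum_pd_gt0 n (Y : 'M[R]_n) l a : pd Y -> spectrum Y l -> a \in l -> 0 < a.
Proof.
move=> [_ Y_pd] Y_spec a_l; have [v vY v_neq0] := spectrum_eigenvector Y_spec a_l.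
have := Y_pd v^T; rewrite trmx_eq0 (quadratic_form_eigenvector vY) => /(_ v_neq0).
by rewrite pmulr_lgt0 // mulmx_trmx_gt0.
Qed.
End RealSymmetric.

Section UnitaryTrace.
Local Open Scope sesquilinear_scope.
Variable R : rcfType.
Local Notation C := R[i].
Local Notation ReC := (@complex.Re R).
Local Notation ImC := (@complex.Im R).

Definition abs2 (z : C) : R := ReC z ^+ 2 + ImC z ^+ 2.

Lemma abs2_ge0 z : 0 <= abs2 z.
Proof. by rewrite addr_ge0 ?sqr_ge0. Qed.

Lemma mulcJ_abs2 (z : C) : z * z^*%C = (abs2 z)%:C%C.
Proof. by rewrite -sqr_normc -add_Re2_Im2. Qed.

Lemma mxtrace_unitary_diag n (V U : 'M[C]_n) (a b : 'I_n -> R) :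
  \tr (V^t* *m diag_mx (\row_i (a i)%:C%C) *m V *m
        (U^t* *m diag_mx (\row_i (b i)%:C%C) *m U))
  = (\sum_i \sum_j a i * abs2 ((V *m U^t* ) i j) * b j)%:C%C.
Proof.
set Da := diag_mx _; set Db := diag_mx _.
rewrite -!mulmxA mxtrace_mulC -!mulmxA.
have -> : Da *m (V *m (U^t* *m (Db *m (U *m V^t* )))) =
          Da *m (V *m U^t* ) *m Db *m (V *m U^t* )^t*.
  by rewrite trmx_mul map_mxM trmxCK !mulmxA.
set P := V *m U^t*; rewrite mul_diag_mx /mxtrace rmorph_sum; apply: eq_bigr => i _.
rewrite mxE rmorph_sum; apply: eq_bigr => j _.
by rewrite mul_mx_diag !mxE !rmorphM /= -mulcJ_abs2; ring.
Qed.

Lemma unitary_abs2_row n (P : 'M[C]_n) i : P \is unitarymx -> \sum_j abs2 (P i j) = 1.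
Proof.
move=> /unitarymxP /matrixP /(_ i i); rewrite !mxE eqxx mulr1n => P_row.
apply: (@complexI R); rewrite rmorph_sum rmorph1 /= -P_row; apply: eq_bigr => j _.
by rewrite -mulcJ_abs2 !mxE.
Qed.

Lemma unitary_abs2_col n (P : 'M[C]_n) j : P \is unitarymx -> \sum_i abs2 (P i j) = 1.
Proof.
rewrite -trmxC_unitary => /unitarymxP; rewrite trmxCK => /matrixP /(_ j j).
rewrite !mxE eqxx mulr1n => P_col.
apply: (@complexI R); rewrite rmorph_sum rmorph1 /= -P_col; apply: eq_bigr => i _.
by rewrite -mulcJ_abs2 !mxE mulrC.
Qed.

Lemma mxtrace_unitary_diag_same n (V : 'M[C]_n) (a b : 'I_n -> R) :
  V \is unitarymx ->
  \tr (V^t* *m diag_mx (\row_i (a i)%:C%C) *m V *m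
        (V^t* *m diag_mx (\row_i (b i)%:C%C) *m V)) = (\sum_i a i * b i)%:C%C.
Proof.
move=> V_unitary; rewrite mxtrace_unitary_diag (unitarymxP V_unitary); congr (_%:C%C).
apply: eq_bigr => i _; rewrite (bigD1 i) //= big1 => [|j ji].
  by rewrite mxE eqxx /abs2 /=; ring.
by rewrite mxE eq_sym (negbTE ji) /abs2 /=; ring.
Qed.

Lemma mxtrace_unitary_diag_ge n (a b : nat -> R) (V U : 'M[C]_n) (p r : 'S_n) :
  (forall i j, (i <= j)%N -> (j < n)%N -> a i <= a j) ->
  (forall i j, (i <= j)%N -> (j < n)%N -> b j <= b i) ->
  V \is unitarymx -> U \is unitarymx ->
  \sum_(i < n) a i * b i <=
  ReC (\tr (V^t* *m diag_mx (\row_i (a (p i))%:C%C) *m V *m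
            (U^t* *m diag_mx (\row_i (b (r i))%:C%C) *m U))).
Proof.
move=> a_mono b_anti V_unitary U_unitary; rewrite mxtrace_unitary_diag /=.
set P := V *m U^t*.
have P_unitary : P \is unitarymx by rewrite mul_unitarymx ?trmxC_unitary.
pose Q (k l : 'I_n) := abs2 (P ((p^-1)%g k) ((r^-1)%g l)).
have -> : \sum_i \sum_j a (p i) * abs2 (P i j) * b (r j) =
          \sum_(k < n) \sum_(l < n) a k * Q k l * b l.
  rewrite [RHS](reindex_inj (@perm_inj _ p)); apply: eq_bigr => i _.
  rewrite [RHS](reindex_inj (@perm_inj _ r)); apply: eq_bigr => j _.
  by rewrite /Q !permK.
apply: rearrangement_doubly_stochastic => // [k l|k|l]; first exact: abs2_ge0.
- rewrite -(unitary_abs2_row ((p^-1)%g k) P_unitary).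
  by rewrite [RHS](reindex_inj (@perm_inj _ (r^-1)%g)).
- rewrite -(unitary_abs2_col ((r^-1)%g l) P_unitary).
  by rewrite [RHS](reindex_inj (@perm_inj _ (p^-1)%g)).
Qed.
End UnitaryTrace.

Section PsdCone.
Local Open Scope sesquilinear_scope.
Variable R : realType.
Local Notation C := R[i].
Local Notation ReC := (@complex.Re R).
Local Notation cpx := (map_mx (real_complex R)).

Lemma psd_Mx n (A : 'M[R]_n) (x : 'I_n -> R) : (forall i, 0 <= x i) -> psd (Mx A x).
Proof.
move=> x_ge0; split.
  apply/matrixP => i j; rewrite /Mx mxE !summxE; apply: eq_bigr => k _.
  by rewrite !mxE; congr (_ * _); apply: eq_bigr => l _; rewrite !mxE mulrC.
move=> v; rewrite /Mx mulmx_sumr mulmx_suml summxE; apply: sumr_ge0 => k _.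
rewrite -scalemxAr -scalemxAl mxE mulr_ge0 //.
have -> : v^T *m (col k A *m (col k A)^T) *m v =
          ((col k A)^T *m v)^T *m ((col k A)^T *m v).
  by rewrite trmx_mul trmxK !mulmxA.
by rewrite mxE big_ord1 mxE -expr2 sqr_ge0.
Qed.

Lemma lambda_min_gt0 n (M : 'M[R]_n) : (0 < n)%N -> pd M -> 0 < lambda_min M.
Proof.
move=> n_gt0 M_pd; have [M_spec _] := symmetric_eigvals_diag M_pd.1.
rewrite /lambda_min; have [l_size _ _] := M_spec.
case E: (eigvals M) l_size => [|a l] l_size; first by rewrite -l_size in n_gt0.
by apply: (spectrum_pd_gt0 M_pd M_spec); rewrite E /= mem_last.
Qed.

Lemma affine_concave_on_psd n (c : R) (G : 'M[C]_n) :
  concave_on_psd (fun Y => c + ReC (\tr (G *m cpx Y))).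
Proof.
move=> X Y a _ _ _; rewrite map_mxD !map_mxZ mulmxDr -!scalemxAr mxtraceD !mxtraceZ.
case: (\tr (G *m cpx X)) => [x1 x2]; case: (\tr (G *m cpx Y)) => [y1 y2] /=.
rewrite !mul0r !subr0; lra.
Qed.

Lemma Phi_hat_le_majorant n s t (g : 'M[R]_n -> R) X :
  concave_on_psd g -> (forall Y, psd Y -> Phi s t Y <= g Y) ->
  (Phi_hat s t X <= (g X)%:E)%E.
Proof. by move=> g_concave g_ge; apply: ereal_inf_lbound; exists g. Qed.

Lemma det_add_scalar_unitary_diag n (M : 'M[R]_n) (V : 'M[C]_n) (d : 'I_n -> R) t :
  V \is unitarymx -> cpx M = V^t* *m diag_mx (\row_i (d i)%:C%C) *m V ->
  \det (M + t%:M) = \prod_i (d i + t).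
Proof.
move=> V_unitary M_diag; apply: (@complexI R); rewrite -det_map_mx rmorph_prod /=.
have -> : cpx (M + t%:M) = V^t* *m diag_mx (\row_i (d i + t)%:C%C) *m V.
  have -> : diag_mx (\row_i (d i + t)%:C%C) =
            diag_mx (\row_i (d i)%:C%C) + (t%:C%C)%:M :> 'M[C]_n.
    apply/matrixP => i j; rewrite !mxE; case: eqP => _ /=; last by rewrite !mulr0n addr0.
    by rewrite !mulr1n rmorphD.
  rewrite mulmxDr mulmxDl -M_diag mul_mx_scalar -scalemxAl unitarymx_tV //.
  by rewrite scalemx1 map_mxD map_scalar_mx.
rewrite det_conj ?unitarymx_tV // det_diag; apply: eq_bigr => i _.
by rewrite mxE.
Qed.
End PsdCone.

Section TangentMajorant.
Local Open Scope sesquilinear_scope.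
Variable R : realType.
Local Notation C := R[i].
Local Notation ReC := (@complex.Re R).
Local Notation cpx := (map_mx (real_complex R)).

Variables (n s : nat) (t : R) (lam : seq R) (V : 'M[C]_n) (p : 'S_n).
Hypotheses (t_gt0 : 0 < t) (s_gt0 : (0 < s)%N) (s_le_n : (s <= n)%N)
  (lam_size : size lam = n) (lam_sorted : sorted (fun a b => b <= a) lam)
  (lam_ge0 : forall a, a \in lam -> 0 <= a) (V_unitary : V \is unitarymx).

(* 0-based: [slope i] is gamma_(i+1) of the proof sketch and [offset] is c. *)
Definition slope (i : nat) : R := (nth 0 lam (minn i s.-1) + t)^-1.

Definition offset : R :=
  \sum_(i < s) (ln (nth 0 lam i + t) - nth 0 lam i * slope i).

Definition majorant (Y : 'M[R]_n) : R :=
  offset + ReC (\tr (V^t* *m diag_mx (\row_i (slope (p i))%:C%C) *m V *m cpx Y)).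

Definition Theta_lb : R :=
  ((nth 0 lam s + t)^-1 - (nth 0 lam s.-1 + t)^-1) * \sum_(s <= i < n) nth 0 lam i.

Lemma lam_shift_gt0 k : 0 < nth 0 lam k + t.
Proof. by rewrite ltr_wpDl // nth_ge0. Qed.

Lemma slope_gt0 i : 0 < slope i.
Proof. by rewrite invr_gt0 lam_shift_gt0. Qed.

Lemma slope_head i : (i < s)%N -> slope i = (nth 0 lam i + t)^-1.
Proof. by move=> i_lt; rewrite /slope (minn_idPl _) // -ltnS prednK. Qed.

Lemma slope_tail i : (s <= i)%N -> slope i = (nth 0 lam s.-1 + t)^-1.
Proof. by move=> s_le; rewrite /slope (minn_idPr _) // (leq_trans (leq_pred s)). Qed.

Lemma slope_mono i j : (i <= j)%N -> (j < n)%N -> slope i <= slope j.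
Proof.
move=> ij j_lt; rewrite lef_pV2 ?posrE ?lam_shift_gt0 // lerD2r.
by rewrite sorted_ge_nth ?lam_size //; lia.
Qed.

Lemma majorant_concave : concave_on_psd majorant.
Proof. exact: affine_concave_on_psd. Qed.

Lemma majorant_ge_Phi Y : psd Y -> Phi s t Y <= majorant Y.
Proof.
move=> Y_psd; have [Y_spec [U [r [U_unitary Y_diag]]]] := symmetric_eigvals_diag Y_psd.1.
set mu := eigvals Y in Y_spec Y_diag *; have [mu_size mu_sorted _] := Y_spec.
have mu_ge0 k : 0 <= nth 0 mu k.
  by apply: nth_ge0 => a; apply: spectrum_psd_ge0 Y_psd Y_spec.
apply: (@le_trans _ _ (offset + \sum_(i < s) slope i * nth 0 mu i)).
  rewrite /Phi -/mu /offset -big_split /=; apply: ler_sum => i _.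
  have mu_shift_gt0 : 0 < nth 0 mu i + t by rewrite ltr_wpDl.
  apply: le_trans (ln_le_tangent (lam_shift_gt0 i) mu_shift_gt0) _.
  rewrite slope_head //; lra.
apply: (@le_trans _ _ (offset + \sum_(i < n) slope i * nth 0 mu i)).
  rewrite lerD2l (big_ord_widen _ (fun i => slope i * nth 0 mu i) s_le_n) big_mkcond /=.
  by apply: ler_sum => i _; case: ifP => // _; rewrite mulr_ge0 ?mu_ge0 // ltW ?slope_gt0.
rewrite lerD2l /majorant Y_diag; apply: mxtrace_unitary_diag_ge => //.
- exact: slope_mono.
- by move=> i j ij j_lt; rewrite sorted_ge_nth // mu_size.
Qed.

Lemma majorant_at M :
  cpx M = V^t* *m diag_mx (\row_i (nth 0 lam (p i))%:C%C) *m V ->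
  majorant M = \sum_(i < s) ln (nth 0 lam i + t)
               + (nth 0 lam s.-1 + t)^-1 * \sum_(s <= i < n) nth 0 lam i.
Proof.
move=> M_diag; rewrite /majorant M_diag mxtrace_unitary_diag_same //=.
have -> : \sum_i slope (p i) * nth 0 lam (p i) = \sum_(i < n) slope i * nth 0 lam i.
  by rewrite [RHS](reindex_inj (@perm_inj _ p)).
rewrite -(big_mkord xpredT (fun i => slope i * nth 0 lam i)).
rewrite (big_cat_nat (leq0n s) s_le_n) /=.
rewrite big_mkord mulr_sumr addrA /offset -big_split /=; congr (_ + _).
  by apply: eq_bigr => i _; rewrite mulrC subrK.
by apply: eq_big_nat => i /andP[s_le _]; rewrite slope_tail.
Qed.

Lemma ln_det_shift M :
  cpx M = V^t* *m diag_mx (\row_i (nth 0 lam (p i))%:C%C) *m V ->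
  ln (\det (M + t%:M)) = \sum_(i < n) ln (nth 0 lam i + t).
Proof.
move=> M_diag; rewrite (det_add_scalar_unitary_diag _ V_unitary M_diag).
rewrite ln_prod => [|i _]; last exact: lam_shift_gt0.
by rewrite [RHS](reindex_inj (@perm_inj _ p)).
Qed.

Lemma Theta_lb_ge0 : 0 <= Theta_lb.
Proof.
rewrite mulr_ge0 ?sumr_ge0 // => [|i _]; last exact: nth_ge0.
rewrite subr_ge0 lef_pV2 ?posrE ?lam_shift_gt0 // lerD2r.
have [s_lt_n|] := ltnP s n; first by rewrite sorted_ge_nth ?lam_size // leq_pred.
by rewrite -lam_size => /(nth_default 0) ->; apply: nth_ge0.
Qed.

Lemma Theta_lb_le_gap :
  Theta_lb <= (\sum_(i < n) ln (nth 0 lam i + t) - (n - s)%:R * ln t)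
              - (\sum_(i < s) ln (nth 0 lam i + t)
                 + (nth 0 lam s.-1 + t)^-1 * \sum_(s <= i < n) nth 0 lam i).
Proof.
have tail_ge : (nth 0 lam s + t)^-1 * \sum_(s <= i < n) nth 0 lam i <=
               \sum_(s <= i < n) (ln (nth 0 lam i + t) - ln t).
  rewrite mulr_sumr; apply: ler_sum_nat => i /andP[s_le i_lt].
  have tangent := ln_le_tangent (lam_shift_gt0 i) t_gt0.
  have : (nth 0 lam s + t)^-1 * nth 0 lam i <= nth 0 lam i / (nth 0 lam i + t).
    rewrite mulrC ler_wpM2l ?nth_ge0 // lef_pV2 ?posrE ?lam_shift_gt0 //.
    by rewrite lerD2r sorted_ge_nth ?lam_size.
  lra.
rewrite sumrB sumr_const_nat -mulr_natl in tail_ge.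
rewrite -(big_mkord xpredT (fun i => ln (nth 0 lam i + t))).
rewrite (big_cat_nat (leq0n s) s_le_n) /= big_mkord /Theta_lb.
lra.
Qed.
End TangentMajorant.

Unset Implicit Arguments.

Theorem theorem5 (R : realType) (n s : nat) (C A : 'M[R]_n) (xstar : 'I_n -> R) :
  (1 <= n)%N -> (1 <= s <= n)%N -> pd C ->
  cholesky_factor C (lambda_min C) A ->
  feasible s xstar ->
  (forall x, feasible s x ->
     (Phi_hat s (lambda_min C) (Mx A x) <= Phi_hat s (lambda_min C) (Mx A xstar))%E) ->
  let t := lambda_min C in
  let lam := eigvals (Mx A xstar) in
  (* lam`_(i-1) = lambda*_i ; lam`_n = 0 = lambda*_{n+1} *)
  let Theta := ((nth 0 lam s + t)^-1 - (nth 0 lam s.-1 + t)^-1)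
               * \sum_(s <= i < n) nth 0 lam i in
  (Theta%:E <= z_hat_D A s t - z_hat A s t)%E /\ 0 <= Theta.
Proof.
move=> n_gt0 /andP[s_gt0 s_le_n] C_pd _ xstar_feas x_opt t lam Theta.
have t_gt0 : 0 < t := lambda_min_gt0 n_gt0 C_pd.
have M_psd : psd (Mx A xstar) by apply: psd_Mx => i; case: xstar_feas => /(_ i) /andP[].
have [M_spec [V [p [V_unitary M_diag]]]] := symmetric_eigvals_diag M_psd.1.
have [lam_size lam_sorted _] := M_spec.
have lam_ge0 a : a \in lam -> 0 <= a := spectrum_psd_ge0 M_psd M_spec.
split; last exact: Theta_lb_ge0.
have z_hat_le : (z_hat A s t <= (majorant s t lam V p (Mx A xstar))%:E)%E.
  apply: ge_ereal_sup => _ [x x_feas <-]; apply: le_trans (x_opt x x_feas) _.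
  apply: Phi_hat_le_majorant; first exact: majorant_concave.
  by move=> Y; apply: majorant_ge_Phi.
have z_hat_D_ge : ((\sum_(i < n) ln (nth 0 lam i + t) - (n - s)%:R * ln t)%:E
                   <= z_hat_D A s t)%E.
  rewrite -(ln_det_shift t_gt0 lam_ge0 V_unitary M_diag) EFinB.
  by apply: leeB => //; apply: ereal_sup_ubound; exists xstar.
apply: le_trans (leeB z_hat_D_ge z_hat_le); rewrite -EFinB lee_fin.
by rewrite (majorant_at t s_le_n V_unitary M_diag); apply: Theta_lb_le_gap.
Qed.
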